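(* Let $\mathcal{STAB}$ be the set of channels $\rho\mapsto U\rho U^\dagger$ with $U$ an element of the $n$-qubit Clifford group. Then there is a function $\eta(n)\to0$ as $n\to\infty$ such that for every $m$ and every sample $S=(z_1,\ldots,z_m)$ with $z_i\in\mathbb{F}_2^n\times\mathbb{F}_2^n$, \[ \hat{R}_S(\mathcal{F}(\mathcal{STAB}))\le 4\,\frac{(1+\eta(n))\,n}{\sqrt m}\,\max_{\Phi\in\mathcal{STAB}}\|\vec f_\Phi\|_\infty, \] where $\vec f_\Phi=(f_\Phi(z_1),\ldots,f_\Phi(z_m))$.
   Context: For a channel $\Phi$ on $n$ qubits, $f_\Phi(x,y)=\mathrm{Tr}[\Phi(|x\rangle\langle x|)\,|y\rangle\langle y|]$ for $x,y\in\mathbb{F}_2^n$; $\mathcal{F}(\Omega)=\{f_\Phi:\Phi\in\Omega\}$. Empirical Rademacher complexity: $\hat{R}_S(\mathcal{G})=\mathbb{E}_{\epsilon}[\sup_{g\in\mathcal{G}}\frac1m\sum_i\epsilon_i g(z_i)]$, $\epsilon_i$ i.i.d. uniform on $\{\pm1\}$. *)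

From HB Require Import structures.
From mathcomp Require Import all_boot all_order all_algebra.
From mathcomp Require Import complex.
From mathcomp Require Import all_classical all_reals all_analysis.
Set Implicit Arguments. Unset Strict Implicit. Unset Printing Implicit Defensive.
Import Order.TTheory GRing.Theory Num.Theory.
Local Open Scope ring_scope.
Local Open Scope classical_set_scope.

Section Quantum.
Variable R : realType.
Local Notation C := (complex R).

(* computational basis labels of n qubits: F_2^n as bit vectors *)
Definition qubits (n : nat) : finType := {ffun 'I_n -> bool}.

(* operators on (C^2)^{⊗n}, as matrices indexed by basis labels *)
Definition op (n : nat) := qubits n -> qubits n -> C.

Definition opmul n (A B : op n) : op n := fun x y => \sum_k A x k * B k y.
Definition opadj n (A : op n) : op n := fun x y => conjc (A y x).
Definition opid n : op n := fun x y => (x == y)%:R.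
Definition opscale n (c : C) (A : op n) : op n := fun x y => c * A x y.
Definition optrace n (A : op n) : C := \sum_x A x x.
Definition proj n (x : qubits n) : op n := fun u v => ((u == x) && (v == x))%:R.

Definition unitary n (U : op n) :=
  opmul U (opadj U) = @opid n /\ opmul (opadj U) U = @opid n.

Definition bxor n (a b : qubits n) : qubits n := [ffun i => a i (+) b i].
Definition bdot n (a b : qubits n) : nat := \sum_i (a i && b i).

(* the Pauli string X^a Z^b : |y> |-> (-1)^{b.y} |y xor a> *)
Definition pauli n (a b : qubits n) : op n :=
  fun x y => if x == bxor y a then (-1) ^+ bdot b y else 0.

(* n-qubit Clifford group: unitaries normalizing the Pauli group
   { i^k X^a Z^b } under conjugation *)
Definition clifford n (U : op n) :=
  unitary U /\
  forall a b : qubits n, exists (c d : qubits n) (k : 'I_4),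
    opmul (opmul U (pauli a b)) (opadj U) = opscale ('i ^+ k) (pauli c d).

Definition channel n := op n -> op n.

Definition STAB n : set (channel n) :=
  [set Phi | exists U, clifford U /\ Phi = fun rho => opmul (opmul U rho) (opadj U)].

(* f_Phi(x,y) = Tr[Phi(|x><x|) |y><y|] (real part; the trace is real) *)
Definition fPhi n (Phi : channel n) (z : qubits n * qubits n) : R :=
  complex.Re (optrace (opmul (Phi (proj z.1)) (proj z.2))).

Definition Fset n (Omega : set (channel n)) : set (qubits n * qubits n -> R) :=
  [set fPhi Phi | Phi in Omega].

End Quantum.

(* empirical Rademacher complexity: expectation over eps uniform in {+-1}^m
   (eps i = (-1)^(b i) for b : {ffun 'I_m -> bool}) of the supremum *)
Definition sgnb (R : realType) (b : bool) : R := if b then -1 else 1.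

Definition empRad (R : realType) (Z : Type) (m : nat) (S : 'I_m -> Z)
  (G : set (Z -> R)) : R :=
  (2 ^+ m)^-1 * \sum_(b : {ffun 'I_m -> bool})
     sup [set (m%:R^-1 * \sum_i sgnb R (b i) * g (S i)) | g in G].

Definition vinf (R : realType) (Z : Type) (m : nat) (S : 'I_m -> Z) (f : Z -> R) : R :=
  \big[Num.max/0]_i `|f (S i)|.

From Pilot Require Import Defs.
From HB Require Import structures.
From mathcomp Require Import all_boot all_order all_algebra.
From mathcomp Require Import complex.
From mathcomp Require Import all_classical all_reals all_analysis.
From mathcomp Require Import ring lra.
Set Implicit Arguments. Unset Strict Implicit. Unset Printing Implicit Defensive.
Import Order.TTheory GRing.Theory Num.Theory.
Local Open Scope ring_scope.
Local Open Scope classical_set_scope.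

(* A Clifford unitary U is determined, as far as f_Phi is concerned, by the
   images U Z_i U^dagger = i^k X^c Z^d of the n single-qubit Pauli Z's:
   since |x><x| = prod_i (1 + (-1)^(x_i) Z_i) / 2, the function
   f_Phi(x,y) = Tr[U |x><x| U^dagger |y><y|] only depends on this "code"
   (clifford_code).  There are (4^(n+1))^n codes, so F(STAB) is a finite
   class with log-cardinality at most 2 (n^2 + n) (card_code).

   Massart's finite class lemma (massart, proved by the Chernoff method with
   a Hoeffding bound for Rademacher signs) then bounds the empirical
   Rademacher complexity of any such class by
   2 sqrt(2 L) / sqrt m * max_Phi ||f_Phi||_inf (empRad_finite_class);
   with L = 2 (n^2 + n) the constant is at most 4 (1 + 1/(n+1)) n
   (massart_constant), so eta(n) = 1/(n+1) works. *)

Section Massart.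
Variable R : realType.

(* for small y, cosh y <= 1 + 2 y^2, using e^y e^-y = 1 and e^t >= 1 + t *)
Lemma cosh_le_small (y : R) : y ^+ 2 <= 2^-1 ->
  (expR y + expR (- y)) / 2 <= 1 + 2 * y ^+ 2.
Proof.
move=> hs.
have hab : expR y * expR (- y) = 1 by rewrite -expRD subrr expR0.
have hp1 := expR_gt0 y; have hp2 := expR_gt0 (- y).
have hy1 := expR_ge1Dx y; have hy2 := expR_ge1Dx (- y).
have yb1 : y < 1 by nra.
have yb2 : -1 < y by nra.
have e1 : expR y * (1 - y) <= 1.
  by rewrite -hab; apply: ler_wpM2l; [exact: ltW|lra].
have e2 : expR (- y) * (1 + y) <= 1.
  by rewrite -hab mulrC; apply: ler_wpM2r; [exact: ltW|lra].
have e3 : (expR y + expR (- y)) * (1 - y ^+ 2) <= 2.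
  have -> : (expR y + expR (- y)) * (1 - y ^+ 2) =
     expR y * (1 - y) * (1 + y) + expR (- y) * (1 + y) * (1 - y) by ring.
  have ha : expR y * (1 - y) * (1 + y) <= 1 + y.
    by rewrite -[X in _ <= X]mul1r; apply: ler_wpM2r; [lra|].
  have hb : expR (- y) * (1 + y) * (1 - y) <= 1 - y.
    by rewrite -[X in _ <= X]mul1r; apply: ler_wpM2r; [lra|].
  lra.
have e4 : 2 <= (2 + 4 * y ^+ 2) * (1 - y ^+ 2).
  have : 0 <= y ^+ 2 * (1 - 2 * y ^+ 2) by apply: mulr_ge0; [exact: sqr_ge0|lra].
  nra.
have h1y : 0 < 1 - y ^+ 2 by lra.
have e5 : expR y + expR (- y) <= 2 + 4 * y ^+ 2.
  by rewrite -(ler_pM2r h1y); apply: le_trans e4.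
lra.
Qed.

(* Hoeffding's lemma for one Rademacher sign (crude constant):
   cosh y <= exp (2 y^2); when y^2 > 1/2 we have |y| <= 2 y^2 and each
   exponential is bounded separately *)
Lemma cosh_le (y : R) : (expR y + expR (- y)) / 2 <= expR (2 * y ^+ 2).
Proof.
have [hs|hs] := leP (y ^+ 2) (2^-1).
  have := cosh_le_small hs; have := expR_ge1Dx (2 * y ^+ 2); lra.
have ya : `|y| <= 2 * y ^+ 2.
  rewrite -[y ^+ 2](real_normK (num_real y)).
  have h : 2^-1 < `|y| ^+ 2 by rewrite real_normK ?num_real.
  have h0 := normr_ge0 y.
  nra.
have k1 : expR y <= expR (2 * y ^+ 2).
  by rewrite ler_expR; apply: le_trans ya; exact: ler_norm.
have k2 : expR (- y) <= expR (2 * y ^+ 2).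
  by rewrite ler_expR; apply: le_trans ya; rewrite -normrN; exact: ler_norm.
lra.
Qed.

(* The uniform average over all sign patterns b : {+-1}^m, i.e. the
   expectation with respect to m independent Rademacher variables. *)
Definition signAvg (m : nat) (F : {ffun 'I_m -> bool} -> R) : R :=
  (2 ^+ m)^-1 * \sum_b F b.

Definition corr (m : nat) (b : {ffun 'I_m -> bool}) (a : 'I_m -> R) : R :=
  \sum_i sgnb R (b i) * a i.

Lemma signAvgZ (m : nat) (c : R) (F : {ffun 'I_m -> bool} -> R) :
  signAvg (fun b => c * F b) = c * signAvg F.
Proof. by rewrite /signAvg -mulr_sumr mulrCA. Qed.

Lemma signAvg_sum (m : nat) (K : finType) (P : {set K})
    (F : K -> {ffun 'I_m -> bool} -> R) :
  signAvg (fun b => \sum_(k in P) F k b) = \sum_(k in P) signAvg (F k).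
Proof. by rewrite /signAvg exchange_big mulr_sumr. Qed.

Lemma ler_signAvg (m : nat) (F G : {ffun 'I_m -> bool} -> R) :
  (forall b, F b <= G b) -> signAvg F <= signAvg G.
Proof.
move=> FG; rewrite ler_wpM2l ?invr_ge0 ?exprn_ge0 //.
by apply: ler_sum => b _; exact: FG.
Qed.

Lemma signAvg_prod (m : nat) (F : 'I_m -> bool -> R) :
  signAvg (fun b => \prod_i F i (b i)) = \prod_i ((F i true + F i false) / 2).
Proof.
rewrite /signAvg -bigA_distr_bigA.
have -> : (2 ^+ m)^-1 = \prod_(i < m) (2 : R)^-1.
  by rewrite prodr_const card_ord exprVn.
rewrite -big_split /=; apply: eq_bigr => i _.
by rewrite big_bool mulrC.
Qed.

(* Jensen's inequality for the exponential, via the tangent line at the mean *)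
Lemma expR_signAvg (m : nat) (x : {ffun 'I_m -> bool} -> R) :
  expR (signAvg x) <= signAvg (fun b => expR (x b)).
Proof.
set mu := signAvg x.
have h2 : (0 : R) < 2 ^+ m by rewrite exprn_gt0.
have tangent b : expR mu * (1 + (x b - mu)) <= expR (x b).
  have e : expR (x b) = expR mu * expR (x b - mu) by rewrite -expRD addrC subrK.
  by rewrite e ler_pM2l ?expR_gt0 // expR_ge1Dx.
have sum_x : \sum_b x b = 2 ^+ m * mu by rewrite /mu /signAvg mulrA mulfV ?mul1r ?gt_eqF.
have avg_tangent : signAvg (fun b => expR mu * (1 + (x b - mu))) = expR mu.
  rewrite /signAvg -mulr_sumr big_split big_split /= sumr_const sumrN sumr_const.
  have natmul_pow y : y *+ 2 ^ m = y * 2 ^+ m by rewrite -natrX mulr_natr.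
  rewrite card_ffun card_bool card_ord sum_x !natmul_pow mul1r [mu * _]mulrC.
  by rewrite subrr addr0 mulrCA mulVf ?mulr1 // gt_eqF.
by rewrite -[X in X <= _]avg_tangent; apply: ler_signAvg.
Qed.

Lemma signAvg_expR_corr (m : nat) (a : 'I_m -> R) (V lam : R) :
  (forall i, `|a i| <= V) ->
  signAvg (fun b => expR (lam * corr b a)) <= expR (lam ^+ 2 * (2 * m%:R * V ^+ 2)).
Proof.
move=> aV.
have -> : (fun b => expR (lam * corr b a))
    = (fun b : {ffun 'I_m -> bool} => \prod_i expR (lam * (sgnb R (b i) * a i))).
  by apply: funext => b; rewrite /corr mulr_sumr expR_sum.
rewrite (signAvg_prod (fun i j => expR (lam * (sgnb R j * a i)))).
have -> : lam ^+ 2 * (2 * m%:R * V ^+ 2) = m%:R * (2 * lam ^+ 2 * V ^+ 2) by ring.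
rewrite expRM_natl.
have -> : expR (2 * lam ^+ 2 * V ^+ 2) ^+ m = \prod_(i < m) expR (2 * lam ^+ 2 * V ^+ 2).
  by rewrite prodr_const card_ord.
apply: ler_prod => i _; apply/andP; split.
  by apply: divr_ge0; [apply: addr_ge0; exact: expR_ge0|].
rewrite /sgnb mulN1r mul1r mulrN addrC.
apply: le_trans (cosh_le _) _; rewrite ler_expR.
have V0 : 0 <= V := le_trans (normr_ge0 _) (aV i).
have a2V : a i ^+ 2 <= V ^+ 2.
  by rewrite -(real_normK (num_real (a i))); apply: lerXn2r; rewrite ?nnegrE ?aV.
by rewrite exprMn -mulrA ler_pM2l // ler_wpM2l // sqr_ge0.
Qed.

(* the largest correlation of b with the vectors a k, k in P; the vector
   a k0 provides the neutral element of the maximum *)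
Definition maxCorr (K : finType) (m : nat) (P : {set K}) (a : K -> 'I_m -> R)
    (k0 : K) (b : {ffun 'I_m -> bool}) : R :=
  \big[Num.max/corr b (a k0)]_(k in P) corr b (a k).

(* exponential moment form of Massart's finite class lemma: the maximum is
   bounded by the sum of exponentials, and each term by the Rademacher mgf *)
Lemma massart_chernoff (K : finType) (m : nat) (P : {set K})
    (a : K -> 'I_m -> R) (k0 : K) (V L lam : R) :
  k0 \in P -> (forall k i, k \in P -> `|a k i| <= V) ->
  #|P|%:R <= expR L -> 0 < lam ->
  lam * signAvg (maxCorr P a k0) <= L + lam ^+ 2 * (2 * m%:R * V ^+ 2).
Proof.
move=> Pk0 aV PL lam0.
have exp_max_le_sum b :
    expR (lam * maxCorr P a k0 b) <= \sum_(k in P) expR (lam * corr b (a k)).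
  have term_le k : k \in P ->
      expR (lam * corr b (a k)) <= \sum_(k in P) expR (lam * corr b (a k)).
    by move=> Pk; rewrite (bigD1 k) //= lerDl sumr_ge0 // => *; exact: expR_ge0.
  rewrite /maxCorr; elim/big_ind: _ => //; first exact: term_le.
  by move=> x y hx hy; rewrite maxElt; case: ifP.
rewrite -ler_expR -signAvgZ.
apply: le_trans (expR_signAvg _) _.
apply: le_trans (ler_signAvg exp_max_le_sum) _.
rewrite signAvg_sum.
apply: le_trans (ler_sum _ (fun k Pk => signAvg_expR_corr lam (fun i => aV k i Pk))) _.
rewrite sumr_const -[_ *+ #|P|]mulr_natl expRD.
by apply: ler_pM; rewrite ?ler0n ?expR_ge0.
Qed.

(* optimizing the Chernoff parameter lam = M / 2B *)
Lemma chernoff_optimize (M L B : R) : 0 <= L -> 0 <= B ->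
  (forall lam, 0 < lam -> lam * M <= L + lam ^+ 2 * B) ->
  M <= 2 * Num.sqrt (L * B).
Proof.
move=> L0 B0 h; have [hM|hM] := leP M 0.
  by apply: le_trans hM _; rewrite mulr_ge0 ?sqrtr_ge0.
have M2 : M ^+ 2 <= 4 * (L * B).
  have [B00|Bp] := eqVneq B 0.
    have hl : 0 < (L + 1) / M by apply: divr_gt0 => //; lra.
    have := h _ hl; rewrite B00 mulr0 addr0 divfK ?gt_eqF //; lra.
  have Bp' : 0 < B by rewrite lt_neqAle eq_sym Bp B0.
  have hl : 0 < M / (2 * B) by apply: divr_gt0 => //; lra.
  have e : M / (2 * B) * (2 * B) = M by rewrite divfK // gt_eqF //; lra.
  have hi := h _ hl.
  move: hl hi e; set lam := M / (2 * B) => hl hi e.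
  rewrite -e; nra.
have rhs0 : 0 <= 2 * Num.sqrt (L * B) by rewrite mulr_ge0 ?sqrtr_ge0.
rewrite -ler_sqr ?nnegrE ?(ltW hM) // exprMn sqr_sqrtr ?mulr_ge0 //.
by apply: le_trans M2 _; rewrite expr2 -natrM.
Qed.

Lemma massart (K : finType) (m : nat) (P : {set K}) (a : K -> 'I_m -> R)
    (k0 : K) (V L : R) :
  k0 \in P -> (forall k i, k \in P -> `|a k i| <= V) -> #|P|%:R <= expR L ->
  signAvg (maxCorr P a k0) <= 2 * Num.sqrt (L * (2 * m%:R * V ^+ 2)).
Proof.
move=> Pk0 aV PL.
have L0 : 0 <= L.
  rewrite -ler_expR expR0; apply: le_trans PL; rewrite ler1n card_gt0.
  by apply/set0Pn; exists k0.
apply: chernoff_optimize => //; first by rewrite mulr_ge0 ?sqr_ge0 ?mulr_ge0.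
by move=> lam; exact: massart_chernoff.
Qed.

End Massart.

Section FiniteClass.
Variable R : realType.

Lemma vinf_ge (Z : Type) (m : nat) (S : 'I_m -> Z) (g : Z -> R) (i : 'I_m) :
  `|g (S i)| <= vinf S g.
Proof. exact: (le_bigmax _ (fun i => `|g (S i)|)). Qed.

Lemma vinf_ge0 (Z : Type) (m : nat) (S : 'I_m -> Z) (g : Z -> R) :
  0 <= vinf S g.
Proof. by rewrite /vinf; elim/big_ind: _ => // x y x0 _; rewrite le_max x0. Qed.

(* the sup norm bound of a class is nonnegative (sup is 0 when undefined) *)
Lemma sup_vinf_ge0 (Z : Type) (m : nat) (S : 'I_m -> Z) (G : set (Z -> R)) :
  0 <= sup [set vinf S g | g in G].
Proof.
have [supG|nosup] := pselect (has_sup [set vinf S g | g in G]); last first.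
  by rewrite sup_out.
have [[x [g Gg _]] _] := supG.
by apply: le_trans (vinf_ge0 S g) _; apply: sup_upper_bound => //; exists g.
Qed.

(* a class coded by a finite type has a bounded set of sup norms, so each
   of its members is below the supremum *)
Lemma vinf_le_sup (Z : Type) (K : finType) (code : K -> Z -> R)
    (m : nat) (S : 'I_m -> Z) (G : set (Z -> R)) (g : Z -> R) :
  G `<=` range code -> G g -> vinf S g <= sup [set vinf S g | g in G].
Proof.
move=> Gcode Gg; apply: sup_upper_bound; last by exists g.
split; first by exists (vinf S g), g.
exists (\big[Num.max/0]_k vinf S (code k)) => _ [h Gh <-].
by have [k _ <-] := Gcode h Gh; exact: (le_bigmax _ (fun k => vinf S (code k))).
Qed.

Lemma empRad_le_maxCorr (Z : Type) (K : finType) (code : K -> Z -> R)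
    (m : nat) (S : 'I_m -> Z) (G : set (Z -> R)) (P : {set K}) (k0 : K) :
  (forall g, G g -> exists2 k, k \in P & code k = g) -> G (code k0) ->
  empRad S G <= m%:R^-1 * signAvg (maxCorr P (fun k i => code k (S i)) k0).
Proof.
move=> inP Gk0; rewrite -signAvgZ; apply: ler_signAvg => b.
apply: ge_sup; first by exists (m%:R^-1 * corr b (fun i => code k0 (S i))), (code k0).
move=> _ [g Gg <-]; have [k Pk <-] := inP g Gg.
rewrite ler_wpM2l ?invr_ge0 //.
exact: (le_bigmax_cond _ (fun k => corr b (fun i => code k (S i))) Pk).
Qed.

Lemma empRad_finite_class (Z : Type) (K : finType) (code : K -> Z -> R)
    (m : nat) (S : 'I_m -> Z) (G : set (Z -> R)) (L : R) :
  (0 < m)%N -> G `<=` range code -> #|K|%:R <= expR L ->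
  empRad S G <= 2 * Num.sqrt (2 * L) / Num.sqrt m%:R * sup [set vinf S g | g in G].
Proof.
move=> m0 Gcode KL.
have [->|/set0P [g0 Gg0]] := eqVneq G set0.
  rewrite image_set0 sup0 mulr0 /empRad big1 ?mulr0 // => b _.
  by rewrite image_set0 sup0.
pose P : {set K} := finset (fun k => `[< G (code k) >]).
have PG k : k \in P -> G (code k) by rewrite inE => /asboolP.
have inP g : G g -> exists2 k, k \in P & code k = g.
  move=> Gg; have [k _ ek] := Gcode g Gg.
  by exists k => //; rewrite inE; apply/asboolP; rewrite ek.
have [k0 Pk0 _] := inP g0 Gg0.
set V := sup [set vinf S g | g in G].
have aV k i : k \in P -> `|code k (S i)| <= V.
  move=> Pk; apply: le_trans (vinf_ge S (code k) i) _.
  exact: vinf_le_sup Gcode (PG k Pk).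
have PL : #|P|%:R <= expR L by apply: le_trans KL; rewrite ler_nat max_card.
have hmass := massart Pk0 aV PL.
apply: le_trans (empRad_le_maxCorr S inP (PG k0 Pk0)) _.
apply: le_trans (ler_wpM2l _ hmass) _; first by rewrite invr_ge0.
set s := Num.sqrt m%:R.
have s0 : 0 < s by rewrite sqrtr_gt0 ltr0n.
have ss : s ^+ 2 = m%:R by rewrite sqr_sqrtr.
have V0 : 0 <= V := sup_vinf_ge0 S G.
have sV0 : 0 <= s * V by rewrite mulr_ge0 // ltW.
rewrite -ss (_ : L * _ = (s * V) ^+ 2 * (2 * L)); last by ring.
rewrite sqrtrM ?sqr_ge0 // sqrtr_sqr ger0_norm //.
by rewrite le_eqVlt; apply/orP; left; apply/eqP; field; rewrite gt_eqF.
Qed.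

End FiniteClass.

Section CliffordCode.
Variable R : realType.
Local Notation C := (complex R).
Variable n : nat.
Local Notation N := #|qubits n|.

Definition basis : 'I_N -> qubits n := enum_val.

Lemma basis_bij : bijective basis. Proof. exact: enum_val_bij. Qed.

Lemma basis_inj : injective basis. Proof. exact: bij_inj basis_bij. Qed.

Definition mx (A : op R n) : 'M[C]_N := \matrix_(i, j) A (basis i) (basis j).

Lemma sum_basis (F : qubits n -> C) : \sum_k F k = \sum_(l : 'I_N) F (basis l).
Proof.
by rewrite (reindex basis) //; case: basis_bij => g h1 h2; exists g => x _.
Qed.

Lemma mx_mul (A B : op R n) : mx (opmul A B) = mx A *m mx B.
Proof.
apply/matrixP => i j; rewrite !mxE /opmul sum_basis.
by apply: eq_bigr => l _; rewrite !mxE.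
Qed.

Lemma mx_id : mx (@opid R n) = 1%:M.
Proof. by apply/matrixP => i j; rewrite !mxE /opid (inj_eq basis_inj). Qed.

Lemma mx_scale (c : C) (A : op R n) : mx (opscale c A) = c *: mx A.
Proof. by apply/matrixP => i j; rewrite !mxE. Qed.

Lemma mx_trace (A : op R n) : optrace A = \tr (mx A).
Proof.
by rewrite /optrace sum_basis /mxtrace; apply: eq_bigr => i _; rewrite mxE.
Qed.

Definition bzero : qubits n := [ffun=> false].
Definition bunit (i : 'I_n) : qubits n := [ffun j => j == i].
Definition pauliZ (i : 'I_n) : op R n := pauli R bzero (bunit i).

Lemma bxor0 (v : qubits n) : bxor v bzero = v.
Proof. by apply/ffunP => j; rewrite !ffunE addbF. Qed.

Lemma bdot_bunit (i : 'I_n) (v : qubits n) : bdot (bunit i) v = v i.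
Proof.
rewrite /bdot (bigD1 i) //= big1 ?addn0 ?ffunE ?eqxx //.
by move=> j /negbTE hj; rewrite ffunE hj.
Qed.

Definition projBit (x : qubits n) (i : 'I_n) : op R n :=
  fun u v => (u == v)%:R * (x i == u i)%:R.

Lemma mx_projBit (x : qubits n) (i : 'I_n) :
  mx (projBit x i) = 2^-1 *: (1%:M + (-1) ^+ (x i) *: mx (pauliZ i)).
Proof.
apply/matrixP => a b.
rewrite !mxE /projBit /pauliZ /pauli bxor0 bdot_bunit (inj_eq basis_inj).
case: (eqVneq a b) => [->|_]; last by rewrite !(mulr0n, mul0r, mulr0, addr0).
rewrite mul1r.
by case: (x i); case: (basis b i); rewrite /= ?expr0 ?expr1; field.
Qed.

Definition mxprod (D : 'I_n -> 'M[C]_N) (l : seq 'I_n) : 'M[C]_N :=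
  foldr (fun i acc => D i *m acc) 1%:M l.

Lemma mxprod_conj (W Wd : 'M[C]_N) (D : 'I_n -> 'M[C]_N) (l : seq 'I_n) :
  Wd *m W = 1%:M -> W *m Wd = 1%:M ->
  W *m mxprod D l *m Wd = mxprod (fun i => W *m D i *m Wd) l.
Proof.
move=> WdW WWd; elim: l => [|i l IH]; first by rewrite /mxprod /= mulmx1.
rewrite /mxprod /= -/(mxprod D l) -/(mxprod (fun i => W *m D i *m Wd) l).
rewrite -IH !mulmxA.
by rewrite -[W *m D i *m Wd *m W]mulmxA WdW mulmx1.
Qed.

Definition projBits (x : qubits n) (l : seq 'I_n) : op R n :=
  fun u v => (u == v)%:R * \prod_(i <- l) (x i == u i)%:R.

Lemma mxprod_projBit (x : qubits n) (l : seq 'I_n) :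
  mxprod (fun i => mx (projBit x i)) l = mx (projBits x l).
Proof.
elim: l => [|i l IH].
  rewrite /mxprod /= -mx_id; congr mx; apply: funext => u; apply: funext => v.
  by rewrite /projBits big_nil mulr1.
rewrite /mxprod /= -/(mxprod _ l) IH -mx_mul; congr mx.
apply: funext => u; apply: funext => v.
rewrite /opmul /projBits /projBit big_cons (bigD1 u) //= [X in _ + X = _]big1 ?addr0.
  by rewrite eqxx mul1r; case: (u == v); rewrite ?mul1r ?mul0r ?mulr0.
by move=> k hk; rewrite eq_sym (negbTE hk) !mul0r.
Qed.

Lemma projBits_all (x : qubits n) : projBits x (index_enum 'I_n) = Defs.proj R x.
Proof.
apply: funext => u; apply: funext => v; rewrite /projBits /Defs.proj.
case: (boolP [forall i, x i == u i]) => [/forallP h | /forallPn [i hi]].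
  have -> : u = x by apply/ffunP => i; rewrite (eqP (h i)).
  by rewrite big1 ?mulr1 ?eqxx 1?eq_sym // => j _; rewrite eqxx.
rewrite (bigD1 i) //= (negbTE hi) mul0r mulr0.
by have /negbTE -> : u != x by apply/eqP => ux; rewrite ux eqxx in hi.
Qed.

(* A code records, for each qubit i, the Pauli string X^c Z^d and the phase
   i^k such that U Z_i U^dagger = i^k X^c Z^d. *)
Definition code := {ffun 'I_n -> qubits n * qubits n * 'I_4}.

Definition codePauli (c : code) (i : 'I_n) : 'M[C]_N :=
  'i ^+ (c i).2 *: mx (pauli R (c i).1.1 (c i).1.2).

(* Tr[U |x><x| U^dagger |y><y|] computed from the code of U, using
   U |x><x| U^dagger = prod_i (1 + (-1)^(x_i) U Z_i U^dagger) / 2 *)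
Definition codeFun (c : code) (z : qubits n * qubits n) : R :=
  complex.Re (\tr (mxprod (fun i => 2^-1 *: (1%:M + (-1) ^+ (z.1 i) *: codePauli c i))
     (index_enum 'I_n) *m mx (Defs.proj R z.2))).

Lemma clifford_code (U : op R n) : clifford U ->
  exists c : code, fPhi (fun rho => opmul (opmul U rho) (opadj U)) = codeFun c.
Proof.
case=> [[UUd UdU] normalizes].
have WdW : mx (opadj U) *m mx U = 1%:M by rewrite -mx_mul UdU mx_id.
have WWd : mx U *m mx (opadj U) = 1%:M by rewrite -mx_mul UUd mx_id.
have image_Z i : exists t : qubits n * qubits n * 'I_4,
    opmul (opmul U (pauliZ i)) (opadj U) = opscale ('i ^+ t.2) (pauli R t.1.1 t.1.2).
  by have [c [d [k e]]] := normalizes bzero (bunit i); exists (c, d, k).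
have [g hg] := fin_all_exists image_Z.
exists [ffun i => g i]; apply: funext => z.
rewrite /fPhi /codeFun mx_trace !mx_mul -projBits_all -mxprod_projBit mxprod_conj //.
congr (complex.Re (\tr (mxprod _ _ *m _))); apply: funext => i.
rewrite mx_projBit -scalemxAr -scalemxAl mulmxDr mulmxDl mulmx1 WWd.
by rewrite -scalemxAr -scalemxAl -!mx_mul hg mx_scale /codePauli ffunE.
Qed.

Lemma card_code : #|code|%:R <= expR (2 * (n%:R ^+ 2 + n%:R) : R).
Proof.
rewrite /code card_ffun !card_prod /qubits card_ffun card_bool !card_ord.
have -> : (2 * (n%:R ^+ 2 + n%:R) : R) = (n.+1 * n)%:R * 2.
  by rewrite natrM mulrC -natr1; ring.
rewrite expRM_natl.
have -> : ((2 ^ n * 2 ^ n * 4) ^ n)%N = (4 ^ (n.+1 * n))%N.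
  by rewrite -expnMn mulnC -expnS expnM.
rewrite natrX; apply: lerXn2r; rewrite ?nnegrE ?expR_ge0 //.
have e1 := expR_ge1Dx (1 : R).
have -> : (2 : R) = 1 + 1 by [].
rewrite expRD; nra.
Qed.

End CliffordCode.

Lemma Fset_STAB_coded (R : realType) (n : nat) :
  Fset (@STAB R n) `<=` range (@codeFun R n).
Proof.
move=> _ [Phi [U [cliffU ->]] <-].
by have [c ->] := clifford_code cliffU; exists c.
Qed.

(* sqrt(n^2 + n) <= (1 + 1/(n+1)) n: the Massart constant for #|code| is
   at most 4 (1 + harmonic n) n *)
Lemma massart_constant (R : realType) (n : nat) :
  2 * Num.sqrt (2 * (2 * (n%:R ^+ 2 + n%:R))) <= 4 * ((1 + harmonic n) * n%:R) :> R.
Proof.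
set h := harmonic n; have hE : h = n.+1%:R^-1 by [].
have h0 : 0 <= h by rewrite hE invr_ge0.
have hn1 : h * (n%:R + 1) = 1 by rewrite hE -natr1 mulVf // -natr1 pnatr_eq0.
have nn : 0 <= n%:R * (n%:R - 1) :> R.
  by case: n {h hE h0 hn1} => [|k]; rewrite ?mul0r // -natr1 addrK mulr_ge0.
have n0 : 0 <= n%:R :> R by [].
rewrite -ler_sqr ?nnegrE ?mulr_ge0 ?sqrtr_ge0 ?addr_ge0 //.
rewrite exprMn sqr_sqrtr ?mulr_ge0 ?addr_ge0 //.
have : n%:R ^+ 2 + n%:R <= (1 + h) ^+ 2 * n%:R ^+ 2 by nra.
nra.
Qed.

Theorem mainTheorem6 (R : realType) :
  exists eta : nat -> R,
    eta @ \oo --> 0 /\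
    forall (n m : nat) (S : 'I_m -> qubits n * qubits n), (0 < m)%N ->
      empRad S (Fset (@STAB R n)) <=
        4 * ((1 + eta n) * n%:R / Num.sqrt m%:R) *
        sup [set vinf S (fPhi Phi) | Phi in @STAB R n].
Proof.
exists (@harmonic R); split; first exact: cvg_harmonic.
move=> n m S m0.
have bound := empRad_finite_class S m0 (@Fset_STAB_coded R n) (card_code R n).
have -> : [set vinf S (fPhi Phi) | Phi in @STAB R n]
    = [set vinf S g | g in Fset (@STAB R n)] by rewrite image_comp.
apply: le_trans bound _; apply: (ler_wpM2r (sup_vinf_ge0 S _)).
rewrite [X in _ <= X]mulrA; apply: ler_wpM2r; first by rewrite invr_ge0 sqrtr_ge0.
exact: massart_constant.
Qed.
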